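(* Let $\mathcal{G}=(V,E)$ be a DAG with $V=[n]$, and let $i,j\in V$ be distinct and $K\subseteq V\setminus\{i,j\}$ such that $K$ does not $d$-separate $i$ from $j$ in $\mathcal{G}$. Let $\phi_\mathcal{G}^\ast(\det\Sigma_{\{i\}\cup K,\{j\}\cup K})=\prod_{\ell=1}^m f_\ell$ be a factorization into irreducible polynomials $f_\ell\in\mathbb{R}[\lambda,\omega]$, and let $\mathcal{V}(f_\ell)$ denote the zero set of $f_\ell$ in the parameter space $\mathbb{R}^E\times\mathbb{R}^n$. Then \[ \mathcal{M}_{\mathcal{G},i\perp\!\!\!\perp j|K}=\bigcup_{\ell=1}^m \phi_\mathcal{G}(\mathcal{V}(f_\ell))\cap \mathrm{PD}_n . \]
   Context: For a DAG $\mathcal{G}=(V,E)$ on $V=[n]$, let $\Lambda=(\lambda_{ij})$ be an $n\times n$ matrix with $\lambda_{ij}$ a free parameter if $i\to j\in E$ and $\lambda_{ij}=0$ otherwise, and $\Omega=\mathrm{diag}(\omega_1,\dots,\omega_n)$. The map $\phi_\mathcal{G}(\Lambda,\Omega)=(I-\Lambda)^{-T}\Omega(I-\Lambda)^{-1}$ is a polynomial map on $\mathbb{R}^E\times\mathbb{R}^n$ (since $\Lambda$ is nilpotent). The Gaussian DAG model is $\mathcal{M}_\mathcal{G}=\phi_\mathcal{G}(\mathbb{R}^E\times(0,\infty)^n)\subseteq\mathrm{PD}_n$, where $\mathrm{PD}_n$ is the cone of positive definite $n\times n$ matrices. $\mathbb{R}[\lambda,\omega]$ is the polynomial ring in the variables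 $\lambda_{ij}$ ($i\to j\in E$) and $\omega_1,\dots,\omega_n$, and $\phi_\mathcal{G}^\ast:\mathbb{R}[\sigma_{ab}:1\le a\le b\le n]\to\mathbb{R}[\lambda,\omega]$ is the ring homomorphism sending $\sigma_{ab}$ to the $(a,b)$ entry of $(I-\Lambda)^{-T}\Omega(I-\Lambda)^{-1}$. For a symmetric matrix $\Sigma$ and sets $A,B$, $\Sigma_{A,B}$ is the submatrix with rows $A$ and columns $B$. For a Gaussian with covariance $\Sigma$, $i\perp\!\!\!\perp j\mid K$ holds iff $\det\Sigma_{\{i\}\cup K,\{j\}\cup K}=0$; $\mathcal{M}_{i\perp\!\!\!\perp j|K}$ is the set of $\Sigma\in\mathrm{PD}_n$ with this property, and $\mathcal{M}_{\mathcal{G},i\perp\!\!\!\perp j|K}=\mathcal{M}_\mathcal{G}\cap\mathcal{M}_{i\perp\!\!\!\perp j|K}$. $d$-separation: $C$ $d$-separates $a$ and $b$ in $\mathcal{G}$ if every path between them contains a non-collider in $C$ or a collider which is not in $C$ and has no descendant in $C$ (a collider on a path is a node $k$ with consecutive edges $u\to k\leftarrow w$). *)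

From HB Require Import structures.
From mathcomp Require Import all_boot all_order all_algebra.
From mathcomp Require Import mpoly.
From mathcomp Require Import reals.

Set Implicit Arguments.
Unset Strict Implicit.
Unset Printing Implicit Defensive.

Import Order.TTheory GRing.Theory Num.Theory.
Local Open Scope ring_scope.

(* A directed graph on V = [n] = 'I_n is an edge relation E; i -> j iff E i j. *)
Definition acyclic (n : nat) (E : rel 'I_n) : Prop :=
  forall x y : 'I_n, E x y -> ~~ connect E y x.

Definition adj (n : nat) (E : rel 'I_n) : rel 'I_n := fun u v => E u v || E v u.

Definition collider_at (n : nat) (E : rel 'I_n) (x0 : 'I_n) (s : seq 'I_n) (t : nat) : bool :=
  E (nth x0 s t.-1) (nth x0 s t) && E (nth x0 s t.+1) (nth x0 s t).

Definition blocked (n : nat) (E : rel 'I_n) (C : {set 'I_n}) (x0 : 'I_n) (s : seq 'I_n) : Prop :=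
  exists t : nat, [/\ (0 < t)%N, (t < (size s).-1)%N &
    if collider_at E x0 s t
    then (nth x0 s t \notin C) /\ (forall d, connect E (nth x0 s t) d -> d \notin C)
    else nth x0 s t \in C].

Definition dsep (n : nat) (E : rel 'I_n) (C : {set 'I_n}) (a b : 'I_n) : Prop :=
  forall p : seq 'I_n, path (adj E) a p -> last a p = b -> uniq (a :: p) ->
    blocked E C a (a :: p).

Definition edge (n : nat) (E : rel 'I_n) := {p : 'I_n * 'I_n | E p.1 p.2}.

Definition Lam (S : nzRingType) (n : nat) (E : rel 'I_n) (w : edge E -> S) : 'M[S]_n :=
  \matrix_(a, b) match @insub _ (fun p : 'I_n * 'I_n => E p.1 p.2) (edge E) (a, b) with
                 | Some e => w e | None => 0 end.

Definition Omg (S : nzRingType) (n : nat) (o : 'I_n -> S) : 'M[S]_n :=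
  diag_mx (\row_k o k).

Definition covmx (S : comUnitRingType) (n : nat) (E : rel 'I_n)
    (w : edge E -> S) (o : 'I_n -> S) : 'M[S]_n :=
  (invmx (1%:M - Lam w))^T *m Omg o *m invmx (1%:M - Lam w).

(* Polynomial ring R[lambda, omega]: variables indexed by 'I_(#|E| + n),
   the first #|E| are the lambda_e, the last n are omega_1..omega_n. *)
Definition NV (n : nat) (E : rel 'I_n) : nat := #|{: edge E}| + n.

Definition lamX (R : idomainType) (n : nat) (E : rel 'I_n) (e : edge E) : {mpoly R[NV E]} :=
  'X_(lshift n (enum_rank e)).

Definition omX (R : idomainType) (n : nat) (E : rel 'I_n) (k : 'I_n) : {mpoly R[NV E]} :=
  'X_(rshift #|{: edge E}| k).

Definition pt (R : idomainType) (n : nat) (E : rel 'I_n) (w : edge E -> R) (o : 'I_n -> R)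
    : 'I_(NV E) -> R :=
  fun k => match split k with inl a => w (enum_val a) | inr b => o b end.

(* The index map of {i} u K: position 0 is i, the others run through K in order. *)
Definition idx (n : nat) (i : 'I_n) (K : {set 'I_n}) (a : 'I_(#|K|.+1)) : 'I_n :=
  match unlift ord0 a with Some y => enum_val y | None => i end.

Definition subCI (S : Type) (n : nat) (M : 'M[S]_n) (i j : 'I_n) (K : {set 'I_n})
    : 'M[S]_(#|K|.+1) :=
  \matrix_(a, b) M (@idx n i K a) (@idx n j K b).

Definition posdef (R : numDomainType) (n : nat) (M : 'M[R]_n) : Prop :=
  M^T = M /\ forall x : 'cV[R]_n, x != 0 -> 0 < (x^T *m M *m x) ord0 ord0.

Definition in_model (R : realType) (n : nat) (E : rel 'I_n) (M : 'M[R]_n) : Prop :=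
  exists (w : edge E -> R) (o : 'I_n -> R), (forall k, 0 < o k) /\ covmx w o = M.

Definition irreducible_elem (D : idomainType) (p : D) : Prop :=
  [/\ p != 0, p \isn't a GRing.unit &
      forall q r : D, p = q * r -> q \is a GRing.unit \/ r \is a GRing.unit].

(* Since E is acyclic, I - Lambda has determinant 1, so phi_G is given by
   polynomials in (lambda, omega) and evaluating the generic covariance matrix
   at a parameter point gives phi_G of that point.  Hence the CI minor of
   phi_G(Lambda, Omega) is the product of the f_l at (Lambda, Omega), which
   vanishes iff one factor does.  Conversely, Omega = (I - Lambda)^T Sigma
   (I - Lambda), so positive definiteness of Sigma forces omega > 0 and every
   point of V(f_l) with positive definite image is a genuine model parameter. *)
From HB Require Import structures.
From mathcomp Require Import all_boot all_order all_algebra.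
From mathcomp Require Import mpoly.
From mathcomp Require Import reals.
From mathcomp Require Import fingroup perm.
Import Order.TTheory GRing.Theory Num.Theory.
Local Open Scope ring_scope.

Lemma Lam_nonedge {S : nzRingType} {n} {E : rel 'I_n} (w : edge E -> S) {a b} :
  ~~ E a b -> Lam w a b = 0.
Proof. by move=> nEab; rewrite /Lam mxE insubN. Qed.

Lemma acyclic_perm_edges n (E : rel 'I_n) (s : {perm 'I_n}) :
  acyclic E -> (forall k, s k != k -> E k (s k)) -> s = 1%g.
Proof.
move=> acE sE; apply/permP => k; rewrite perm1; apply/eqP/negPn/negP => sk.
have back : connect E (s k) k.
  have : fconnect s (s k) k by rewrite fconnect_sym; [exact: fconnect1 | exact: perm_inj].
  apply: connect_sub => x _ /eqP <-.
  by have [->|sx] := eqVneq (s x) x; [exact: connect0 | exact/connect1/sE].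
by move: (acE _ _ (sE k sk)); rewrite back.
Qed.

Lemma map_subCI (S T : Type) (f : S -> T) n (M : 'M[S]_n) i j K :
  map_mx f (subCI M i j K) = subCI (map_mx f M) i j K.
Proof. by apply/matrixP => a b; rewrite !mxE. Qed.

Section IminusLam.
Context {n : nat} {E : rel 'I_n}.
Hypothesis acE : acyclic E.

Lemma det_IminusLam {S : comNzRingType} (w : edge E -> S) : \det (1%:M - Lam w) = 1.
Proof.
have nEkk k : ~~ E k k by apply/negP => Ekk; move: (acE _ _ Ekk); rewrite connect0.
rewrite /determinant (bigD1 1%g) //= [X in _ + X]big1 ?addr0.
  rewrite odd_perm1 expr0 mul1r big1 // => k _.
  by rewrite perm1 mxE [(- Lam w) k k]mxE Lam_nonedge // mxE eqxx subr0.
move=> s s_neq1.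
have [k sk nEk] : exists2 k, s k != k & ~~ E k (s k).
  apply/exists_inP; apply: contraR s_neq1 => /exists_inPn sE; apply/eqP.
  by apply: acyclic_perm_edges acE _ => k /sE /negPn.
rewrite (bigD1 k) //= mxE [(- Lam w) k _]mxE Lam_nonedge // mxE eq_sym (negbTE sk).
by rewrite subr0 mul0r mulr0.
Qed.

Lemma unitmx_IminusLam {S : comUnitRingType} (w : edge E -> S) :
  (1%:M - Lam w) \in unitmx.
Proof. by rewrite unitmxE det_IminusLam unitr1. Qed.

Lemma invmx_IminusLam {S : comUnitRingType} (w : edge E -> S) :
  invmx (1%:M - Lam w) = \adj (1%:M - Lam w).
Proof. by rewrite /invmx unitmx_IminusLam det_IminusLam invr1 scale1r. Qed.

Lemma covmx_whiten {S : comUnitRingType} (w : edge E -> S) (o : 'I_n -> S) :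
  (1%:M - Lam w)^T *m covmx w o *m (1%:M - Lam w) = Omg o.
Proof.
have AVA : invmx (1%:M - Lam w) *m (1%:M - Lam w) = 1%:M.
  exact/mulVmx/unitmx_IminusLam.
rewrite /covmx !mulmxA -trmx_mul AVA trmx1 mul1mx -mulmxA AVA.
exact: mulmx1.
Qed.

Lemma posdef_covmx_gt0 {R : numDomainType} (w : edge E -> R) (o : 'I_n -> R) :
  posdef (covmx w o) -> forall k, 0 < o k.
Proof.
case=> _ pdS k; set A := 1%:M - Lam w; set e : 'cV[R]_n := delta_mx k 0.
have e_neq0 : e != 0.
  by apply/negP => /eqP/matrixP/(_ k 0); rewrite !mxE !eqxx => /eqP; rewrite oner_eq0.
have Ae_neq0 : A *m e != 0.
  apply: contra e_neq0 => /eqP Ae0; apply/eqP.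
  by rewrite -[e]mul1mx -(mulVmx (unitmx_IminusLam w)) -mulmxA Ae0 mulmx0.
have := pdS _ Ae_neq0.
have -> : (A *m e)^T *m covmx w o *m (A *m e) = e^T *m Omg o *m e.
  by rewrite -(covmx_whiten w) trmx_mul !mulmxA.
by rewrite trmx_delta -rowE -colE !mxE eqxx mulr1n.
Qed.

Section Evaluation.
Context {R : idomainType} (w : edge E -> R) (o : 'I_n -> R).

Lemma meval_Lam : map_mx (meval (pt w o)) (Lam (@lamX R n E)) = Lam w.
Proof.
apply/matrixP => a b; rewrite !mxE; case: insub => [e|]; last exact: meval0.
by rewrite mevalXU /pt (unsplitK (inl _)) enum_rankK.
Qed.

Lemma meval_Omg : map_mx (meval (pt w o)) (Omg (@omX R n E)) = Omg o.
Proof. by apply/matrixP => a b; rewrite !mxE mevalMn mevalXU /pt (unsplitK (inr _)). Qed.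

Lemma meval_covmx :
  map_mx (meval (pt w o)) (covmx (@lamX R n E) (@omX R n E)) = covmx w o.
Proof.
rewrite /covmx !invmx_IminusLam !map_mxM -map_trmx !map_mx_adj !map_mxB !map_mx1.
by rewrite meval_Lam meval_Omg.
Qed.

Lemma meval_det_subCI (i j : 'I_n) (K : {set 'I_n}) :
  (\det (subCI (covmx (@lamX R n E) (@omX R n E)) i j K)).@[pt w o]
  = \det (subCI (covmx w o) i j K).
Proof. by rewrite -det_map_mx map_subCI meval_covmx. Qed.

End Evaluation.
End IminusLam.

Theorem theorem3p4 (R : realType) (n : nat) (E : rel 'I_n) (Hdag : acyclic E)
    (i j : 'I_n) (K : {set 'I_n})
    (Hij : i != j) (HiK : i \notin K) (HjK : j \notin K)
    (Hnsep : ~ dsep E K i j)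
    (fs : seq {mpoly R[NV E]})
    (Hirr : forall f, f \in fs -> irreducible_elem f)
    (Hfact : \prod_(f <- fs) f = \det (subCI (covmx (@lamX R n E) (@omX R n E)) i j K)) :
  forall Sigma : 'M[R]_n,
    (in_model E Sigma /\ posdef Sigma /\ \det (subCI Sigma i j K) = 0)
    <->
    (exists2 f, f \in fs &
       (exists (w : edge E -> R) (o : 'I_n -> R),
           f.@[pt w o] = 0 /\ covmx w o = Sigma) /\ posdef Sigma).
Proof.
have minor_eq0 w o :
    (\det (subCI (covmx w o) i j K) == 0) = has (fun f => f.@[pt w o] == 0) fs.
  by rewrite -(meval_det_subCI Hdag) -Hfact rmorph_prod prodf_seq_eq0.
move=> Sigma; split.
  case=> [[w [o [_ <-]]] [pdS /eqP]]; rewrite minor_eq0 => /hasP[f fs_f /eqP f0].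
  by exists f => //; split=> //; exists w, o.
case=> f fs_f [[w [o [f0 <-]]] pdS].
have o_gt0 := posdef_covmx_gt0 Hdag _ _ pdS.
split; first by exists w, o.
split=> //; apply/eqP; rewrite minor_eq0; apply/hasP.
by exists f => //; rewrite f0.
Qed.
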